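(* Let $\pi$ be a policy in a goal-conditioned MDP with discrete state space $\mathcal{S}$, fixed goal $s_g$ and discount factor $\gamma \in [0,1)$. For every state $s_0 \in \mathcal{S}$, $$V^\pi(s_0 \mid s_g) \;\geq\; \gamma^{\,d^\pi_T(s_0, s_g)}.$$
   Context: A goal-conditioned MDP has a discrete state space $\mathcal{S}$, discrete action space $\mathcal{A}$, goal-dependent transition kernel $P(\cdot \mid s, a, s_g)$, and discount factor $\gamma\in[0,1)$. The reward is $r(s_t,a_t,s_{t+1}\mid s_g)=\mathbb{I}[s_{t+1}=s_g]$, and on reaching the goal $s_g$ the process moves to an absorbing state with zero reward thereafter. A policy $\pi(\cdot\mid s, s_g)$ is a distribution over actions. For states $s, s_g$, let $T(s_g\mid \pi, s)$ be the random variable giving the first time-step at which $s_g$ is encountered when starting at $s$ and following $\pi$ (with actions $a\sim\pi(\cdot\mid s,s_g)$ and next states drawn from $P$). The time-step (quasi)metric is $d^\pi_T(s, s_g) := \mathbb{E}[T(s_g\mid\pi,s)]$. Under this reward the value of a state is $V^\pi(s\mid s_g) = \mathbb{E}\big[\gamma^{T(s_g\mid \pi, s)}\big]$. *)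

From HB Require Import structures.
From mathcomp Require Import all_boot all_order all_algebra.
From mathcomp Require Import all_classical all_reals.
From mathcomp Require Import ereal topology normedtype sequences esum exp.
Set Implicit Arguments. Unset Strict Implicit. Unset Printing Implicit Defensive.
Import Order.TTheory GRing.Theory Num.Theory.
Local Open Scope classical_set_scope.
Local Open Scope ring_scope.
Local Open Scope ereal_scope.

Section GCMDP.
Variable R : realType.

Definition is_distr (T : choiceType) (p : T -> R) : Prop :=
  (forall x, (0 <= p x)%R) /\ \esum_(x in [set: T]) (p x)%:E = 1.

Variables (S A : countType).
(* policy  pi s sg a = pi(a | s, sg);  kernel  P s a sg s' = P(s' | s, a, sg) *)
Variable pi : S -> S -> A -> R.
Variable P : S -> A -> S -> S -> R.
Variable sg : S.

Definition step (s s' : S) : \bar R :=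
  \esum_(a in [set: A]) (pi s sg a * P s a sg s')%:E.

(* sub_dist s0 t s = Pr(s_t = s and s_u <> sg for all u < t), start s0 *)
Fixpoint sub_dist (s0 : S) (t : nat) (s : S) : \bar R :=
  match t with
  | 0 => if s == s0 then 1 else 0
  | t'.+1 => \esum_(x in [set x : S | x != sg]) (sub_dist s0 t' x * step x s)
  end.

(* Pr(T(sg | pi, s0) = t): first time-step at which sg is encountered *)
Definition hit_prob (s0 : S) (t : nat) : \bar R := sub_dist s0 t sg.

Definition hit_finite (s0 : S) : \bar R := \sum_(t <oo) hit_prob s0 t.

(* d^pi_T(s0, sg) = E[T], equal to +oo when Pr(T = oo) > 0 *)
Definition dT (s0 : S) : \bar R :=
  if hit_finite s0 < 1 then +oo
  else \sum_(t <oo) (t%:R)%:E * hit_prob s0 t.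

(* V^pi(s0 | sg) = E[gamma^T]   (gamma^oo = 0) *)
Definition Vpi (gamma : R) (s0 : S) : \bar R :=
  \sum_(t <oo) (gamma ^+ t)%:E * hit_prob s0 t.

End GCMDP.

Definition epow (R : realType) (gamma : R) (x : \bar R) : \bar R :=
  match x with
  | EFin r => (gamma `^ r)%:E
  | +oo => 0
  | -oo => +oo
  end.

(* Jensen's inequality for the convex map t |-> gamma^t: when T is almost surely
   finite with mean r, the supporting line of gamma^t at r lies below gamma^t,
   and integrating it against the law of T gives E[gamma^T] >= gamma^r.
   Otherwise d_T = +oo and gamma^(+oo) = 0. *)
From HB Require Import structures.
From mathcomp Require Import all_boot all_order all_algebra.
From mathcomp Require Import all_classical all_reals.
From mathcomp Require Import ereal topology normedtype sequences esum exp.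
From mathcomp Require Import lra.
Set Implicit Arguments. Unset Strict Implicit. Unset Printing Implicit Defensive.
Import Order.TTheory GRing.Theory Num.Theory.
Local Open Scope ring_scope.
Local Open Scope ereal_scope.

Lemma powR_ge_tangent (R : realType) (g r t : R) : (0 < g)%R ->
  (g `^ r * (1 + (t - r) * ln g) <= g `^ t)%R.
Proof.
move=> g0; rewrite /powR gt_eqF //.
have -> : (t * ln g = r * ln g + (t - r) * ln g)%R by rewrite addrC -mulrDl subrK.
by rewrite expRD ler_wpM2l ?expR_ge0 ?expR_ge1Dx.
Qed.

Lemma powR_supporting_line (R : realType) (g r : R) :
  (0 <= g < 1)%R -> (0 <= r)%R ->
  exists2 c : R, (0 <= c)%R &
    forall t : nat, (g `^ r + c * r <= g ^+ t + c * t%:R)%R.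
Proof.
move=> /andP[g0 g1] r0; have [->|gn0] := eqVneq g 0%R.
  have [->|rn0] := eqVneq r 0%R.
    exists 1%R => // -[|t]; first by rewrite powRr0 expr0 !mulr0.
    by rewrite powRr0 expr0n mulr0 mul1r add0r addr0 ler1n.
  exists 0%R => // t; rewrite !mul0r !addr0 powR0 ?exprn_ge0 //.
have gp : (0 < g)%R by rewrite lt_neqAle eq_sym gn0.
have lng0 : (ln g < 0)%R by rewrite ln_lt0 // gp g1.
exists (- (g `^ r * ln g))%R => [|t].
  by rewrite oppr_ge0 pmulr_rle0 ?powR_gt0 ?ltW.
have := powR_ge_tangent r t%:R gp.
by rewrite powR_mulrn // mulrDr mulr1 mulrA; lra.
Qed.

Lemma nneseries_ge_supporting_line (R : realType) (p : nat -> \bar R)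
    (f : nat -> R) (a c r : R) :
  (forall t, 0 <= p t) -> (forall t, 0 <= f t)%R -> (0 <= a)%R -> (0 <= c)%R ->
  1 <= \sum_(t <oo) p t ->
  \sum_(t <oo) (t%:R)%:E * p t = r%:E ->
  (forall t : nat, a + c * r <= f t + c * t%:R)%R ->
  a%:E <= \sum_(t <oo) (f t)%:E * p t.
Proof.
move=> p0 f0 a0 c0 mass1 mean line.
have r0 : (0 <= r)%R.
  by rewrite -lee_fin -mean nneseries_ge0 // => t _ _; rewrite mule_ge0.
have ac0 : (0 <= a + c * r)%R by rewrite addr_ge0 ?mulr_ge0.
rewrite -(@leeD2rE _ (c * r)%:E) // -EFinD.
have split_sum : \sum_(t <oo) ((f t)%:E * p t + c%:E * ((t%:R)%:E * p t))
    = \sum_(t <oo) (f t)%:E * p t + (c * r)%:E.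
  by rewrite nneseriesD ?nneseriesZl ?mean // => t *; rewrite !mule_ge0 ?lee_fin.
rewrite -split_sum; apply: le_trans (_ : (a + c * r)%:E * \sum_(t <oo) p t <= _).
  by rewrite -[X in X <= _]mule1; apply: lee_wpmul2l; rewrite ?lee_fin.
rewrite -nneseriesZl //; apply: lee_nneseries => [t _ _|t _].
  by rewrite mule_ge0 ?lee_fin.
rewrite muleA -EFinM -ge0_muleDl ?lee_fin ?mulr_ge0 //.
by apply: lee_wpmul2r; rewrite ?lee_fin.
Qed.

Section HittingTime.
Variables (R : realType) (S A : countType).
Variables (pi : S -> S -> A -> R) (P : S -> A -> S -> S -> R) (sg : S).
Hypothesis pi_ge0 : forall s g a, (0 <= pi s g a)%R.
Hypothesis P_ge0 : forall s a g s', (0 <= P s a g s')%R.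

Lemma step_ge0 s s' : 0 <= step pi P sg s s'.
Proof. by apply: esum_ge0 => a _; rewrite lee_fin mulr_ge0. Qed.

Lemma sub_dist_ge0 s0 t s : 0 <= sub_dist pi P sg s0 t s.
Proof.
elim: t s => [|t IH] s /=; first by case: ifP.
by apply: esum_ge0 => x _; rewrite mule_ge0 ?step_ge0.
Qed.

Lemma hit_prob_ge0 s0 t : 0 <= hit_prob pi P sg s0 t.
Proof. exact: sub_dist_ge0. Qed.

Lemma Vpi_ge0 (gamma : R) s0 : (0 <= gamma)%R -> 0 <= Vpi pi P sg gamma s0.
Proof.
move=> g0; apply: nneseries_ge0 => t _ _.
by rewrite mule_ge0 ?hit_prob_ge0 ?lee_fin ?exprn_ge0.
Qed.

End HittingTime.

Theorem proposition1 (R : realType) (S A : countType)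
  (pi : S -> S -> A -> R) (P : S -> A -> S -> S -> R) (gamma : R) (sg : S)
  (hgamma : (0 <= gamma < 1)%R)
  (hpi : forall s g : S, is_distr (pi s g))
  (hP : forall (s : S) (a : A) (g : S), is_distr (P s a g)) :
  forall s0 : S, epow gamma (dT pi P sg s0) <= Vpi pi P sg gamma s0.
Proof.
move=> s0.
have pi_ge0 s g a : (0 <= pi s g a)%R by exact: (hpi s g).1.
have P_ge0 s a g s' : (0 <= P s a g s')%R by exact: (hP s a g).1.
have p0 t : 0 <= hit_prob pi P sg s0 t by apply: hit_prob_ge0.
have g0 : (0 <= gamma)%R by case/andP: hgamma.
have V0 : 0 <= Vpi pi P sg gamma s0 by apply: Vpi_ge0.
rewrite /dT; case: ifPn => [//|].
rewrite -leNgt => mass1.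
have : 0 <= \sum_(t <oo) (t%:R)%:E * hit_prob pi P sg s0 t.
  by apply: nneseries_ge0 => t _ _; rewrite mule_ge0.
case mean: (\sum_(t <oo) _) => [r| |] r0; last 2 first.
- exact: V0.
- by rewrite leeNy_eq in r0.
rewrite lee_fin in r0.
have [c c0 line] := powR_supporting_line hgamma r0.
have gammaX_ge0 t : (0 <= gamma ^+ t)%R by exact: exprn_ge0.
exact: (nneseries_ge_supporting_line p0 gammaX_ge0 (powR_ge0 _ _) c0 mass1 mean line).
Qed.
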